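(* Let $m$ be a positive even integer and $S_\pi$ a positroid cell of $Gr^+_{k+m/2,n}$. If every $V\in S_\pi$ contains a generic $\frac m2$-plane, then the affine permutation of $\pi$ satisfies $\pi(i)\ge i+\frac m2$ for all $i$.
   Context: $Gr^+_{r,n}$: points of the real Grassmannian with all Plücker coordinates $\ge0$, partitioned into positroid cells $S_\pi$ indexed by decorated permutations $\pi_d$ (for $V$ with columns $v_1,\dots,v_n$, $\pi_d(i)$ is the first $j$ cyclically after $i$ with $v_i\in\mathrm{span}(v_{i+1},\dots,v_j)$; a fixed point $i$ is a loop iff $v_i=0$, else a coloop). The affine permutation $\pi:\mathbb{Z}\to\mathbb{Z}$ has $\pi(i+n)=\pi(i)+n$ and for $i\in[n]$: $\pi(i)=\pi_d(i)$ if $\pi_d(i)>i$, $\pi_d(i)+n$ if $\pi_d(i)<i$, $i$ if $i$ is a loop, $i+n$ if $i$ is a coloop. A point $\lambda\in Gr_{m/2,n}$ is generic if all its Plücker coordinates are nonzero; $V$ contains $\lambda$ if $\lambda\subseteq V$. *)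

From HB Require Import structures.
From mathcomp Require Import all_boot all_order all_algebra.
Set Implicit Arguments. Unset Strict Implicit. Unset Printing Implicit Defensive.
Import Order.TTheory GRing.Theory Num.Theory.
Local Open Scope ring_scope.

(* A point of Gr_{r,n} is represented by a full-rank r x n matrix M;
   the point is its row space, and the columns of M are v_0, ..., v_{n-1}
   (0-based indexing of [n]). *)

Section Grass.
Variable R : realFieldType.

(* strictly increasing index maps 'I_r -> 'I_n, i.e. r-subsets of [n] *)
Definition incr_idx (r n : nat) (f : 'I_r -> 'I_n) : Prop :=
  forall a b : 'I_r, (a < b)%N -> (f a < f b)%N.

Definition in_Gr (r n : nat) (M : 'M[R]_(r, n)) : Prop := \rank M = r.

Definition plucker (r n : nat) (M : 'M[R]_(r, n)) (f : 'I_r -> 'I_n) : R :=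
  \det (colsub f M).

Definition in_TNNGr (r n : nat) (M : 'M[R]_(r, n)) : Prop :=
  in_Gr M /\ forall f : 'I_r -> 'I_n, incr_idx f -> 0 <= plucker M f.

Definition generic (r n : nat) (L : 'M[R]_(r, n)) : Prop :=
  forall f : 'I_r -> 'I_n, incr_idx f -> plucker L f != 0.

Definition colv (r n : nat) (M : 'M[R]_(r, n)) (i : 'I_n) : 'rV[R]_r :=
  \row_a M a i.

Definition cyc (n : nat) (i : 'I_n) (s : nat) : 'I_n :=
  Ordinal (ltn_pmod (i + s) (leq_ltn_trans (leq0n i) (ltn_ord i))).

Definition span_after (r n : nat) (M : 'M[R]_(r, n)) (i : 'I_n) (t : nat)
  : 'M[R]_(t, r) :=
  \matrix_(s < t, a < r) M a (cyc i s.+1).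

Definition in_span_after (r n : nat) (M : 'M[R]_(r, n)) (i : 'I_n) (t : nat)
  : bool := (colv M i <= span_after M i t)%MS.

(* offset t in {0,..,n} of the first j = i + t (cyclically, starting at j = i
   with the empty span) with v_i in span(v_{i+1},...,v_j) *)
Definition first_offset (r n : nat) (M : 'M[R]_(r, n)) (i : 'I_n) : nat :=
  find (in_span_after M i) (iota 0 n.+1).

Definition dperm (r n : nat) (M : 'M[R]_(r, n)) (i : 'I_n) : nat :=
  (i + first_offset M i) %% n.

(* a fixed point i is a loop iff v_i = 0 (otherwise a coloop) *)
Definition is_loop (r n : nat) (M : 'M[R]_(r, n)) (i : 'I_n) : bool :=
  colv M i == 0.

(* W and V lie in the same positroid cell: same decorated permutation *)
Definition same_cell (r n : nat) (W V : 'M[R]_(r, n)) : Prop :=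
  forall i : 'I_n, dperm W i = dperm V i /\
    (dperm V i = i -> is_loop W i = is_loop V i).

Definition affperm_ord (r n : nat) (M : 'M[R]_(r, n)) (i : 'I_n) : nat :=
  if (i < dperm M i)%N then dperm M i
  else if (dperm M i < i)%N then (dperm M i + n)%N
  else if is_loop M i then nat_of_ord i else (i + n)%N.

Definition affperm (r n : nat) (M : 'M[R]_(r, n)) (i : int) : int :=
  match n as n0 return 'M[R]_(r, n0) -> int with
  | 0%N => fun _ => i
  | n'.+1 => fun M' =>
      (affperm_ord M' (inord `|(i %% n'.+1)%Z|%N))%:Z + (i %/ n'.+1)%Z * n'.+1%:Z
  end M.

End Grass.

From HB Require Import structures.
From mathcomp Require Import all_boot all_order all_algebra.
From mathcomp Require Import zify.
Set Implicit Arguments. Unset Strict Implicit. Unset Printing Implicit Defensive.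
Import Order.TTheory GRing.Theory Num.Theory.
Local Open Scope ring_scope.

(* Let L be a generic h-plane inside V, written L = D V. Any h columns of L
   are linearly independent, so the column l_i is not in the span of
   l_{i+1}, ..., l_{i+t} for t < h. The columns of L are the images of those
   of V under D, so v_i is not in that span either: the first j after i with
   v_i in span(v_{i+1}, ..., v_j) is at least i + h, and pi(i) >= i + h. *)

Lemma cyc0 n (i : 'I_n) : cyc i 0 = i.
Proof. by apply: val_inj => /=; rewrite addn0 modn_small. Qed.

Lemma cyc_inj n (i : 'I_n) s s' :
  (s < n)%N -> (s' < n)%N -> cyc i s = cyc i s' -> s = s'.
Proof.
move=> ltsn lts'n /(congr1 val) /= /eqP.
by rewrite eqn_modDl !modn_small // => /eqP.
Qed.

Lemma sorted_enum_set_ord n (A : {set 'I_n}) : sorted ltn (map val (enum A)).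
Proof.
rewrite -[enum _](eq_filter (mem_enum _)).
rewrite -(eq_filter (mem_map val_inj _)) -filter_map.
by rewrite (sorted_filter ltn_trans) // unlock val_ord_enum iota_ltn_sorted.
Qed.

Lemma enum_val_ltn n (A : {set 'I_n}) (a b : 'I_#|A|) :
  (a < b)%N -> (enum_val a < enum_val b)%N.
Proof.
move=> ltab; have x0 := enum_val a.
rewrite !(enum_val_nth x0) -!(nth_map x0 0%N val) -?cardE //.
by apply: (sorted_ltn_nth ltn_trans); rewrite ?inE ?size_map -?cardE ?sorted_enum_set_ord.
Qed.

Lemma incr_enum_set n h (T : {set 'I_n}) :
  #|T| = h -> exists2 f : 'I_h -> 'I_n, incr_idx f & {subset T <= codom f}.
Proof.
move=> cardT; exists (fun a => enum_val (cast_ord (esym cardT) a)).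
  by move=> a b ltab; exact: (@enum_val_ltn n T (cast_ord _ a) (cast_ord _ b) ltab).
move=> j jT; apply/codomP; exists (cast_ord cardT (enum_rank_in jT j)).
by rewrite cast_ordK enum_rankK_in.
Qed.

Lemma card_cyc_window n h (i : 'I_n) :
  (h <= n)%N -> #|[set cyc i s | s : 'I_h]| = h.
Proof.
move=> lehn; rewrite card_imset ?cardsT ?card_ord // => s s' /cyc_inj eqss'.
by apply: val_inj; apply: eqss'; apply: leq_trans lehn.
Qed.

Section Grassmannian.
Variable R : realFieldType.

Lemma generic_row_free h n (L : 'M[R]_(h, n)) (f : 'I_h -> 'I_n) :
  generic L -> incr_idx f -> row_free (colsub f L)^T.
Proof.
move=> gL incr_f; rewrite /row_free mxrank_tr mxrank_unit //.
by rewrite unitmxE unitfE; exact: gL.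
Qed.

(* The h columns l_i, ..., l_{i+h-1} of a generic h-plane are independent,
   and the window l_{i+1}, ..., l_{i+t} lies among them without l_i. *)
Lemma generic_not_in_span_after h n (L : 'M[R]_(h, n)) (i : 'I_n) t :
  generic L -> (h <= n)%N -> (t < h)%N -> ~~ in_span_after L i t.
Proof.
move=> gL lehn ltth; apply/negP => span_i.
pose T := [set cyc i s | s : 'I_h].
have [f incr_f T_f] := incr_enum_set (card_cyc_window i lehn).
pose X := (colsub f L)^T.
have rowX b : row b X = colv L (f b) by apply/rowP => a; rewrite !mxE.
have T_cyc (s : nat) : (s < h)%N -> cyc i s \in T.
  by move=> ltsh; apply/imsetP; exists (Ordinal ltsh).
have iT : i \in T by have := T_cyc 0%N (leq_ltn_trans (leq0n t) ltth); rewrite cyc0.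
have /codomP[i' /esym fi'] := T_f i iT.
have sub_row' (s : 'I_t) : (colv L (cyc i s.+1) <= row' i' X)%MS.
  have ltsh : (s.+1 < h)%N := leq_ltn_trans (ltn_ord s) ltth.
  have ltsn : (s.+1 < n)%N := leq_trans ltsh lehn.
  have /codomP[b /esym fb] := T_f _ (T_cyc s.+1 ltsh).
  have /unlift_some[k eqb _] : i' != b.
    apply/eqP => eqi'b; move: fb; rewrite -eqi'b fi' -{1}(cyc0 i).
    by move=> /(cyc_inj (ltn_trans (ltn0Sn s) ltsn) ltsn).
  rewrite -fb -rowX eqb.
  have -> : row (lift i' k) X = row k (row' i' X) by apply/rowP => a; rewrite !mxE.
  exact: row_sub.
apply/negP: (generic_row_free gL incr_f); apply/row_freePn.
exists i'; rewrite rowX fi'; apply: submx_trans span_i _.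
apply/row_subP => s; have -> : row s (span_after L i t) = colv L (cyc i s.+1).
  by apply/rowP => a; rewrite !mxE.
exact: sub_row'.
Qed.

Lemma in_span_after_mulmx r h n (D : 'M[R]_(h, r)) (M : 'M[R]_(r, n)) i t :
  in_span_after M i t -> in_span_after (D *m M) i t.
Proof.
rewrite /in_span_after.
have -> : colv (D *m M) i = colv M i *m D^T.
  by apply/rowP => b; rewrite !mxE; apply: eq_bigr => c _; rewrite !mxE mulrC.
have -> : span_after (D *m M) i t = span_after M i t *m D^T.
  by apply/matrixP => s b; rewrite !mxE; apply: eq_bigr => c _; rewrite !mxE mulrC.
exact: submxMr.
Qed.

Lemma first_offset_mulmx r h n (D : 'M[R]_(h, r)) (M : 'M[R]_(r, n)) i :
  (first_offset (D *m M) i <= first_offset M i)%N.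
Proof. by apply: sub_find => t; exact: in_span_after_mulmx. Qed.

(* The window v_{i+1}, ..., v_{i+n} wraps around to v_i itself. *)
Lemma in_span_after_size r n (M : 'M[R]_(r, n)) (i : 'I_n) : in_span_after M i n.
Proof.
have ltn1n : (n.-1 < n)%N by rewrite prednK ?ltnn // (leq_ltn_trans _ (ltn_ord i)).
rewrite /in_span_after (_ : colv M i = row (Ordinal ltn1n) (span_after M i n)).
  exact: row_sub.
apply/rowP => a; rewrite !mxE; congr (M a _); apply: val_inj => /=.
by rewrite prednK ?modnDr ?modn_small // (leq_ltn_trans _ (ltn_ord i)).
Qed.

Lemma has_in_span_after r n (M : 'M[R]_(r, n)) (i : 'I_n) :
  has (in_span_after M i) (iota 0 n.+1).
Proof.
by apply/hasP; exists n; rewrite ?in_span_after_size // mem_iota add0n ltnSn.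
Qed.

Lemma first_offset_le r n (M : 'M[R]_(r, n)) (i : 'I_n) : (first_offset M i <= n)%N.
Proof. by have := has_in_span_after M i; rewrite has_find size_iota. Qed.

Lemma in_span_after_first_offset r n (M : 'M[R]_(r, n)) (i : 'I_n) :
  in_span_after M i (first_offset M i).
Proof.
have := nth_find 0%N (has_in_span_after M i).
by rewrite nth_iota ?add0n // ltnS first_offset_le.
Qed.

Lemma generic_first_offset h n (L : 'M[R]_(h, n)) (i : 'I_n) :
  generic L -> (h <= n)%N -> (h <= first_offset L i)%N.
Proof.
move=> gL lehn; rewrite leqNgt; apply/negP => /(generic_not_in_span_after i gL lehn).
by rewrite in_span_after_first_offset.
Qed.

Lemma first_offset_loop r n (M : 'M[R]_(r, n)) (i : 'I_n) :
  is_loop M i -> first_offset M i = 0%N.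
Proof. by move=> /eqP loop_i; rewrite /first_offset /= /in_span_after loop_i sub0mx. Qed.

Lemma affperm_ord_ge r n (M : 'M[R]_(r, n)) (i : 'I_n) :
  (i + first_offset M i <= affperm_ord M i)%N.
Proof.
have := first_offset_le M i; have := @first_offset_loop r n M i.
have := ltn_ord i; rewrite /affperm_ord /dperm; set t := first_offset M i.
move=> ltin loop0 letn; have [ltn|gen] := ltnP (i + t) n.
  rewrite (modn_small ltn); case: ltnP => // _; case: ltnP => [|_]; first lia.
  by case: ifP => [/loop0|]; lia.
rewrite -(subnK gen) modnDr modn_small; last lia.
case: ltnP => [|_]; first lia.
by case: ltnP => [|_]; [lia | case: ifP => [/loop0|]; lia].
Qed.

Lemma affperm_ge r n (M : 'M[R]_(r, n)) d : (0 < n)%N ->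
  (forall j : 'I_n, (j + d <= affperm_ord M j)%N) ->
  forall i : int, i + d%:Z <= affperm M i.
Proof.
case: n M => [//|n] M _ ge_d i /=; set j := inord _.
have valj : (nat_of_ord j)%:Z = (i %% n.+1)%Z.
  rewrite /j inordK; first by rewrite gez0_abs // modz_ge0.
  by rewrite -ltz_nat gez0_abs ?modz_ge0 // ltz_pmod.
rewrite {1}(divz_eq i n.+1) -addrA [X in _ <= X]addrC lerD2l -valj -PoszD lez_nat.
exact: ge_d.
Qed.
End Grassmannian.

Theorem lemma5p6 (R : realFieldType) (k m n : nat) :
  (0 < m)%N -> ~~ odd m ->
  forall V : 'M[R]_(k + m./2, n),
    in_TNNGr V ->
    (forall W : 'M[R]_(k + m./2, n), in_TNNGr W -> same_cell W V ->
       exists L : 'M[R]_(m./2, n), [/\ in_Gr L, generic L & (L <= W)%MS]) ->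
    forall i : int, i + (m./2)%:Z <= affperm V i.
Proof.
move=> m_gt0 m_even V V_TNN has_generic.
have h_gt0 : (0 < m./2)%N.
  by move: m_gt0; rewrite -[m in (0 < m)%N]odd_double_half (negbTE m_even); case: m./2.
have [L [rankL gL /submxP[D eqL]]] :=
  has_generic V V_TNN (fun j => conj erefl (fun _ => erefl)).
have le_hn : (m./2 <= n)%N by rewrite -{1}rankL rank_leq_col.
apply: affperm_ge => [|j]; first exact: leq_trans h_gt0 le_hn.
apply: leq_trans (affperm_ord_ge V j); rewrite leq_add2l.
by apply: leq_trans (generic_first_offset j gL le_hn) _; rewrite eqL first_offset_mulmx.
Qed.
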